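(* Let $\xi_1,\xi_2,\dots$ be i.i.d. standard Gaussian random variables. There is a constant $c_1>0$ such that for all $L>0$ and all integers $N\ge1$ with $2L\le N$, $$-\log\mathbb{E}\,e^{-L\max_{i=1,\dots,N}|\xi_i|}\le c_1L\sqrt{\log(N/L)}.$$ Moreover, there is a constant $c_2>0$ such that for all $L\ge1$ and all integers $N\ge1$ with $2L\le N$, $$-\log\mathbb{E}\,e^{-L\max_{i=1,\dots,N}|\xi_i|}\ge c_2L\sqrt{\log(N/L)}.$$ *)

From HB Require Import structures.
From mathcomp Require Import all_boot all_order all_algebra.
From mathcomp Require Import all_classical all_reals all_analysis.
Set Implicit Arguments. Unset Strict Implicit. Unset Printing Implicit Defensive.
Import Order.TTheory GRing.Theory Num.Theory.
Local Open Scope classical_set_scope.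
Local Open Scope ring_scope.

Definition mutually_independent d (T : measurableType d) (R : realType)
    (P : probability T R) (X : nat -> {RV P >-> R}) : Prop :=
  forall (s : seq nat) (B : nat -> set R), uniq s ->
    (forall i, i \in s -> measurable (B i)) ->
    P (\big[setI/setT]_(i <- s) (X i @^-1` B i)) =
    (\prod_(i <- s) P (X i @^-1` B i))%E.

Definition standard_gaussian d (T : measurableType d) (R : realType)
    (P : probability T R) (X : {RV P >-> R}) : Prop :=
  forall A : set R, measurable A -> distribution P X A = normal_prob 0 1 A.

Definition iid_std_gaussian d (T : measurableType d) (R : realType)
    (P : probability T R) (X : nat -> {RV P >-> R}) : Prop :=
  mutually_independent X /\ forall i, standard_gaussian (X i).

Definition max_abs d (T : measurableType d) (R : realType)
    (P : probability T R) (X : nat -> {RV P >-> R}) (N : nat) (w : T) : R :=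
  \big[Num.max/0]_(i < N) `|X i w|.

From HB Require Import structures.
From mathcomp Require Import all_boot all_order all_algebra.
From mathcomp Require Import all_classical all_reals all_analysis.
From mathcomp Require Import ring lra.
Import Order.TTheory GRing.Theory Num.Theory measurable_realfun.
Local Open Scope classical_set_scope.
Local Open Scope ring_scope.

(* Let M = max_{i<N} |xi_i| and Q t = P(|xi_0| <= t), so that P(M <= t) = Q(t)^N
   by independence. Splitting the expectation on the event {M <= t} gives, for
   every t >= 0,
     e^(-Lt) Q(t)^N <= E e^(-LM) <= e^(-Lt) + Q(t)^N.
   Put u = N/L >= 2 and s = sqrt (ln u). Comparing the N(0,1) density with the
   N(0,2) density gives 1 - Q(t) <= 2 e^(-t^2/4), hence Q(3s) >= 1 - 1/u and
   Q(3s)^N >= e^(-2L); this yields -ln E <= 3Ls + 2L <= 6Ls. For the lower bound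
   take t = s/2 when s >= 4, where 1 - Q(t) >= e^(-(t+1)^2/2)/3 forces
   Q(s/2)^N <= e^(-Ls/2), and t = 1/4 when s < 4, where Q(t) <= t gives
   Q(1/4)^N <= 4^(-2L). Once L >= 1, in both cases
   e^(-Lt) + Q(t)^N <= e^(-Ls/32). *)

Lemma le_sqrtr (R : rcfType) (a b : R) : 0 <= a -> a ^+ 2 <= b -> a <= Num.sqrt b.
Proof.
move=> a0 ab; rewrite -[leLHS]ger0_norm // -sqrtr_sqr ler_sqrt //.
exact: le_trans (sqr_ge0 a) ab.
Qed.

Lemma sqrtr_le (R : rcfType) (a b : R) : 0 <= a -> b <= a ^+ 2 -> Num.sqrt b <= a.
Proof.
move=> a0 ba; rewrite -[leRHS]ger0_norm // -sqrtr_sqr.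
have [b0|b0] := leP 0 b; first by rewrite ler_sqrt // sqr_ge0.
by rewrite ltr0_sqrtr // sqrtr_ge0.
Qed.

Definition normal_abs_cdf {R : realType} (t : R) : R :=
  fine (normal_prob 0 1 `[- t, t]).

Section standard_normal.
Context {R : realType}.
Local Notation Q := (@normal_abs_cdf R).

Let pi_lt4 : pi < 4 :> R.
Proof. have := @pihalf_lt2 R; lra. Qed.

Let sqrt_pi_gt0 (a : R) : 0 < a -> 0 < Num.sqrt (a * pi *+ 2).
Proof. by move=> a0; rewrite sqrtr_gt0 mulrn_wgt0 // mulr_gt0 // pi_gt0. Qed.

Lemma normal_peak1_le : normal_peak (1 : R) <= 2^-1.
Proof.
rewrite /normal_peak expr1n lef_pV2 ?posrE ?sqrt_pi_gt0 //.
by apply: le_sqrtr => //; have := @pi_ge2 R; rewrite mulr2n; lra.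
Qed.

Lemma normal_peak1_ge : 3^-1 <= normal_peak (1 : R).
Proof.
rewrite /normal_peak expr1n lef_pV2 ?posrE ?sqrt_pi_gt0 //.
by apply: sqrtr_le => //; have := pi_lt4; rewrite mulr2n; lra.
Qed.

Lemma normal_peak_sqrt2_ge : 4^-1 <= normal_peak (Num.sqrt 2 : R).
Proof.
rewrite /normal_peak sqr_sqrtr // lef_pV2 ?posrE ?sqrt_pi_gt0 //.
by apply: sqrtr_le => //; have := pi_lt4; rewrite mulr2n; lra.
Qed.

Lemma normal_pdf01E (x : R) :
  normal_pdf 0 1 x = normal_peak 1 * expR (- x ^+ 2 / 2).
Proof. by rewrite /normal_pdf oner_eq0 /normal_fun subr0 expr1n. Qed.

Lemma normal_pdf0sqrt2E (x : R) :
  normal_pdf 0 (Num.sqrt 2) x = normal_peak (Num.sqrt 2) * expR (- x ^+ 2 / 4).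
Proof.
rewrite /normal_pdf gt_eqF ?sqrtr_gt0 // /normal_fun subr0 sqr_sqrtr //.
by congr (_ * expR (_ / _)); rewrite mulr2n; lra.
Qed.

Lemma normal_abs_cdfE (t : R) : normal_prob 0 1 `[- t, t] = (Q t)%:E.
Proof. by rewrite fineK // fin_num_measure. Qed.

Lemma normal_prob_itvC (t : R) : normal_prob 0 1 (~` `[- t, t]) = (1 - Q t)%:E.
Proof.
by rewrite probability_setC // EFinB; congr (_ - _)%E; exact: normal_abs_cdfE.
Qed.

Lemma normal_abs_cdf_ge0 (t : R) : 0 <= Q t.
Proof. by rewrite -lee_fin -normal_abs_cdfE measure_ge0. Qed.

Let measurable_normal_pdfE (m s : R) (D : set R) :
  measurable_fun D (fun x => (normal_pdf m s x)%:E).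
Proof.
by apply/measurable_EFinP; apply: measurable_funTS; exact: measurable_normal_pdf.
Qed.

Lemma normal_abs_cdf_le_id (t : R) : 0 <= t -> Q t <= t.
Proof.
move=> t0; rewrite -lee_fin -normal_abs_cdfE /normal_prob.
apply: (@le_trans _ _
  (\int[lebesgue_measure]_(x in `[(- t)%R, t]) cst (2^-1 : R)%:E x))%E.
  apply: ge0_le_integral => //.
  - by move=> x _; rewrite lee_fin normal_pdf_ge0.
  - exact: measurable_normal_pdfE.
  - move=> x _; rewrite lee_fin (le_trans (normal_pdf_ub _ _ _)) ?oner_neq0 //.
    exact: normal_peak1_le.
rewrite integral_cst // [X in (_ * X)%E](_ : _ = (t - - t)%:E).
  by rewrite -EFinM lee_fin; lra.
apply: (eq_trans (lebesgue_measure_itv _)); rewrite /= lte_fin.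
by case: ltP => ? /=; congr EFin; lra.
Qed.

(* Outside [-t, t] the N(0,1) density is at most 2 e^(-t^2/4) times the
   N(0,2) density. *)
Lemma normal_abs_cdf_ge_tail (t : R) : 0 <= t -> 1 - 2 * expR (- t ^+ 2 / 4) <= Q t.
Proof.
move=> t0; set c := 2 * expR (- t ^+ 2 / 4).
have c0 : 0 <= c by rewrite mulr_ge0 ?expR_ge0.
suff : (normal_prob 0 1 (~` `[(- t)%R, t]) <= c%:E)%E.
  by rewrite normal_prob_itvC lee_fin; lra.
apply: (@le_trans _ _ (\int[lebesgue_measure]_(x in ~` `[(- t)%R, t])
                        (c * normal_pdf 0 (Num.sqrt 2) x)%:E))%E.
  apply: ge0_le_integral => //.
  - exact: measurableC.
  - by move=> x _; rewrite lee_fin normal_pdf_ge0.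
  - exact: measurable_normal_pdfE.
  - apply/measurable_EFinP; apply: measurable_funTS.
    by apply: measurable_funM => //; exact: measurable_normal_pdf.
  move=> x /= xt; rewrite lee_fin normal_pdf01E normal_pdf0sqrt2E /c.
  have tx : t ^+ 2 <= x ^+ 2.
    move: xt; rewrite in_itv /= -ler_norml => /negP; rewrite -ltNge => xt.
    by rewrite -(real_normK (num_real x)); nra.
  rewrite (_ : - x ^+ 2 / 2 = - x ^+ 2 / 4 + - x ^+ 2 / 4) ?expRD; last lra.
  set a := expR (- x ^+ 2 / 4); set b := expR (- t ^+ 2 / 4).
  have a0 : 0 <= a := expR_ge0 _.
  have ab : a <= b by rewrite ler_expR; lra.
  apply: (@le_trans _ _ (2^-1 * (b * a))).
    by rewrite ler_pM ?mulr_ge0 ?normal_peak_ge0 ?normal_peak1_le ?ler_wpM2r.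
  have := normal_peak_sqrt2_ge; have := mulr_ge0 (le_trans a0 ab) a0; nra.
under eq_integral do rewrite EFinM.
rewrite ge0_integralZl_EFin //; last 2 first.
- by move=> x _; rewrite lee_fin normal_pdf_ge0.
- exact: measurable_normal_pdfE.
rewrite -[leRHS]mule1 lee_wpmul2l ?lee_fin //.
  have := @probability_le1 _ _ _ (normal_prob 0 (Num.sqrt 2)) (~` `[(- t)%R, t]).
  by rewrite /normal_prob; apply; exact: measurableC.
exact: measurableC.
Qed.

(* The interval ]t, t + 1] lies outside [-t, t] and carries density at least
   e^(-(t+1)^2/2) / 3. *)
Lemma normal_abs_cdf_le_tail (t : R) :
  0 <= t -> Q t <= 1 - 3^-1 * expR (- (t + 1) ^+ 2 / 2).
Proof.
move=> t0; set c := 3^-1 * expR (- (t + 1) ^+ 2 / 2).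
suff : (c%:E <= normal_prob 0 1 (~` `[(- t)%R, t]))%E.
  by rewrite normal_prob_itvC lee_fin; lra.
have sub : `]t, t + 1] `<=` ~` `[- t, t].
  move=> x /=; rewrite !in_itv /= => /andP[tx _] /andP[_ xt]; lra.
apply: (@le_trans _ _ (normal_prob 0 1 `]t, (t + 1)%R]))%E; last first.
  by apply: le_measure => //; rewrite inE //; exact: measurableC.
rewrite /normal_prob.
apply: (@le_trans _ _ (\int[lebesgue_measure]_(x in `]t, (t + 1)%R]) cst c%:E x))%E.
  rewrite integral_cst // [X in (_ * X)%E](_ : _ = 1%:E) ?mule1 //.
  apply: (eq_trans (lebesgue_measure_itv _)).
  by rewrite /= lte_fin ltrDl ltr01 /=; congr EFin; lra.
apply: ge0_le_integral => //.
- by move=> x _; rewrite lee_fin mulr_ge0 ?expR_ge0.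
- exact: measurable_normal_pdfE.
move=> x /=; rewrite in_itv /= => /andP[tx xt].
rewrite lee_fin normal_pdf01E /c ler_pM ?invr_ge0 ?expR_ge0 ?normal_peak1_ge //.
by rewrite ler_expR; nra.
Qed.

End standard_normal.

Section laplace_transform.
Context {d} {T : measurableType d} {R : realType} (P : probability T R).
Variables (M : T -> R) (L t : R).
Hypotheses (mM : measurable_fun setT M) (L0 : 0 <= L).
Local Notation below_t := [set w | M w <= t].

Let measurable_below_t : measurable below_t.
Proof.
rewrite (_ : below_t = M @^-1` `]-oo, t]); last first.
  by apply/seteqP; split=> w /=; rewrite in_itv.
by rewrite -[_ @^-1` _]setTI; exact: mM.
Qed.

Let measurable_expNM : measurable_fun setT (fun w => expR (- (L * M w))).
Proof. by apply: measurableT_comp => //; apply/measurable_funN/measurable_funM. Qed.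

Let measurable_indic_below_t : measurable_fun setT (fun w => (\1_below_t w : R)%:E).
Proof. exact/measurable_EFinP/measurable_indic. Qed.

Let indic_below_t_ge0 w : (0 <= (\1_below_t w : R)%:E)%E.
Proof. by rewrite lee_fin indicE; case: (_ \in _). Qed.

Lemma expectation_expNM_ge :
  ((expR (- (L * t)))%:E * P below_t <= 'E_P[fun w => expR (- (L * M w))])%E.
Proof.
rewrite unlock -(setIT below_t) -integral_indic //.
rewrite -ge0_integralZl_EFin ?expR_ge0 //.
apply: ge0_le_integral => //.
- exact: measurable_funeM.
- exact/measurable_EFinP.
move=> w _; rewrite -EFinM lee_fin indicE.
have [/set_mem Mwt|_] := boolP (w \in _); last by rewrite mulr0 expR_ge0.
by rewrite mulr1 ler_expR lerN2 ler_wpM2l.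
Qed.

Lemma expectation_expNM_le : (forall w, 0 <= M w) ->
  ('E_P[fun w => expR (- (L * M w))] <= (expR (- (L * t)))%:E + P below_t)%E.
Proof.
move=> M0; rewrite unlock -(setIT below_t) -integral_indic //.
rewrite -[X in (X + _)%E]mule1 -(probability_setT P) -integral_cst //.
rewrite -ge0_integralD //; last by move=> w _; rewrite lee_fin expR_ge0.
apply: ge0_le_integral => //.
- exact/measurable_EFinP.
- by apply: emeasurable_funD => //; exact: measurable_cst.
move=> w _; rewrite /= -EFinD lee_fin indicE.
have [_|Mwt] := boolP (w \in _).
  rewrite (@le_trans _ _ 1) ?lerDr ?expR_ge0 //.
  by rewrite -[leRHS]expR0 ler_expR oppr_le0 mulr_ge0.
have tMw : t < M w by rewrite ltNge; apply: contra Mwt => ?; exact/mem_set.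
by rewrite addr0 ler_expR lerN2 ler_wpM2l // ltW.
Qed.

End laplace_transform.

Section max_abs.
Context {d} {T : measurableType d} {R : realType} {P : probability T R}.
Context {xi : nat -> {RV P >-> R}}.

Lemma max_abs_ge0 N w : 0 <= max_abs xi N w.
Proof. by rewrite /max_abs; elim/big_ind: _ => // x y; rewrite le_max => ->. Qed.

Lemma measurable_max_abs N : measurable_fun setT (max_abs xi N).
Proof.
rewrite /max_abs; elim: (index_enum _) => [|i s IH].
  by under eq_fun do rewrite big_nil; exact: measurable_cst.
under eq_fun do rewrite big_cons.
by apply: measurable_maxr IH; exact/measurableT_comp/measurable_funPT.
Qed.

Lemma max_abs_le_bigcap N t : 0 <= t ->
  [set w | max_abs xi N w <= t] =
  \big[setI/setT]_(i <- iota 0 N) (xi i @^-1` `[- t, t]).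
Proof.
move=> t0; rewrite -bigcap_seq; apply/seteqP; split=> w /=.
  move=> /bigmax_leP[_ xit] i /=; rewrite mem_iota add0n => iN.
  by rewrite in_itv /= -ler_norml (xit (Ordinal iN)).
move=> xit; apply/bigmax_leP; split=> // i _.
by have := xit i; rewrite /= mem_iota add0n ltn_ord in_itv /= -ler_norml; apply.
Qed.

Lemma prob_max_abs_le N t : iid_std_gaussian xi -> 0 <= t ->
  P [set w | max_abs xi N w <= t] = (normal_abs_cdf t ^+ N)%:E.
Proof.
move=> [indep gauss] t0; rewrite max_abs_le_bigcap // indep ?iota_uniq //.
rewrite (eq_bigr (fun=> (normal_abs_cdf t)%:E)) => [|i _].
  by rewrite prodEFin -(subn0 N) -prodr_const_nat.
by rewrite -normal_abs_cdfE; apply: gauss.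
Qed.

Lemma laplace_max_abs_bounds N (L t : R) : iid_std_gaussian xi ->
  0 <= L -> 0 <= t ->
  expR (- (L * t)) * normal_abs_cdf t ^+ N <=
    fine 'E_P[fun w => expR (- (L * max_abs xi N w))] <=
  expR (- (L * t)) + normal_abs_cdf t ^+ N.
Proof.
move=> iid L0 t0.
have ge := expectation_expNM_ge P _ _ t (measurable_max_abs N) L0.
have le := expectation_expNM_le P _ _ t (measurable_max_abs N) L0 (max_abs_ge0 N).
move: ge le; rewrite prob_max_abs_le // -EFinM -EFinD.
by case: ('E_P[_])%E => //= r; rewrite !lee_fin => -> ->.
Qed.

End max_abs.

Section real_estimates.
Context {R : realType}.
Local Notation Q := (@normal_abs_cdf R).

Lemma oppr_ln_le (a x : R) : expR a <= x -> - ln x <= - a.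
Proof.
move=> ax; have x0 := lt_le_trans (expR_gt0 a) ax.
by rewrite lerN2 -[leLHS]expRK ler_ln ?posrE ?expR_gt0.
Qed.

Lemma oppr_ln_ge (a x : R) : 0 < x -> x <= expR a -> - a <= - ln x.
Proof. by move=> x0 xa; rewrite lerN2 -[leRHS]expRK ler_ln ?posrE ?expR_gt0. Qed.

Lemma four_ninths_le_ln (u : R) : 2 <= u -> 4 / 9 <= ln u.
Proof.
move=> u2; have e0 := expR_gt0 (4 / 9 : R).
have e49 : expR (- (4 / 9)) * expR (4 / 9) = 1 :> R.
  by rewrite -expRD addNr expR0.
have e59 : 5 / 9 <= expR (- (4 / 9) : R) by have := expR_ge1Dx (- (4 / 9) : R); lra.
by rewrite -[leLHS]expRK ler_ln ?posrE //; [nra | lra].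
Qed.

Lemma two_thirds_le_sqrt_ln (u : R) : 2 <= u -> 2 / 3 <= Num.sqrt (ln u).
Proof. by move=> /four_ninths_le_ln u49; apply: le_sqrtr; lra. Qed.

(* e^(Lx) = e^(Lg) e^(L(x-g)) <= e^(Lg) e^(x-g), and likewise for y. *)
Lemma expR_sum_scale_le (L x y g : R) : 1 <= L -> x <= g -> y <= g ->
  expR x + expR y <= expR g -> expR (L * x) + expR (L * y) <= expR (L * g).
Proof.
move=> L1 xg yg xyg.
have ex : expR (L * x) <= expR (L * g) * expR (x - g).
  by rewrite -expRD ler_expR; nra.
have ey : expR (L * y) <= expR (L * g) * expR (y - g).
  by rewrite -expRD ler_expR; nra.
have e1 : expR (x - g) + expR (y - g) <= 1.
  by rewrite !expRD -mulrDl expRN ler_pdivrMr ?expR_gt0 // mul1r.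
have := expR_gt0 (L * g); nra.
Qed.

Lemma expRN2x_le_1Bx (x : R) : 0 <= x -> x <= 2^-1 -> expR (- (2 * x)) <= 1 - x.
Proof.
move=> x0 x2; have e0 := expR_gt0 (2 * x); have e1 := expR_ge1Dx (2 * x).
rewrite expRN -div1r ler_pdivrMr //.
have : 0 <= (1 - x) * (expR (2 * x) - (1 + 2 * x)) by apply: mulr_ge0; lra.
have : 0 <= x * (1 - 2 * x) by apply: mulr_ge0; lra.
nra.
Qed.

(* The tail bound at t = 3 sqrt(ln u) is 2 u^(-9/4) <= u^-1. *)
Lemma normal_abs_cdf_3sqrt_ln_ge (u : R) : 2 <= u ->
  1 - u^-1 <= Q (3 * Num.sqrt (ln u)).
Proof.
move=> u2; have lnu := four_ninths_le_ln _ u2.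
set s := Num.sqrt (ln u); have ss : s ^+ 2 = ln u by rewrite sqr_sqrtr //; lra.
have s0 : 0 <= 3 * s by rewrite mulr_ge0 ?sqrtr_ge0.
apply: le_trans (normal_abs_cdf_ge_tail _ s0); rewrite lerD2l lerN2.
have -> : u^-1 = expR (- (3 * s) ^+ 2 / 4) * expR (5 / 4 * ln u).
  rewrite -expRD (_ : _ + _ = - ln u); last by rewrite -ss; lra.
  by rewrite expRN lnK // posrE; lra.
have : u <= expR (5 / 4 * ln u).
  by rewrite -[leLHS]lnK ?posrE ?ler_expR //; lra.
have := expR_gt0 (- (3 * s) ^+ 2 / 4); nra.
Qed.

Lemma normal_abs_cdf_pow_ge (L : R) (N : nat) : 0 < L -> 2 * L <= N%:R ->
  expR (- (2 * L)) <= Q (3 * Num.sqrt (ln (N%:R / L))) ^+ N.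
Proof.
move=> L0 LN; set u := N%:R / L.
have u2 : 2 <= u by rewrite ler_pdivlMr.
have u0 : 0 < u by lra.
have -> : - (2 * L) = N%:R * - (2 * u^-1) by rewrite /u invf_div; field; lra.
have ui : u^-1 <= 2^-1 by rewrite lef_pV2 ?posrE; lra.
have ui0 : 0 <= u^-1 by rewrite invr_ge0 ltW.
rewrite expRM_natl lerXn2r ?nnegrE ?expR_ge0 ?normal_abs_cdf_ge0 //.
apply: le_trans (normal_abs_cdf_3sqrt_ln_ge _ u2); exact: expRN2x_le_1Bx.
Qed.

Lemma expR_add_normal_abs_cdf_quarter_le (L : R) (N : nat) :
  1 <= L -> 2 * L <= N%:R ->
  expR (- (L * 4^-1)) + Q 4^-1 ^+ N <= expR (- (L * 8^-1)).
Proof.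
move=> L1 LN; set a := ln (4 : R).
have ea : expR (- a) = 4^-1 by rewrite expRN lnK ?posrE.
have a0 : 0 <= a by apply: ln_ge0; lra.
have Qpow : Q 4^-1 ^+ N <= expR (L * - (2 * a)).
  apply: (@le_trans _ _ (4^-1 ^+ N)).
    by rewrite lerXn2r ?nnegrE ?normal_abs_cdf_ge0 ?normal_abs_cdf_le_id.
  rewrite -ea -expRM_natl ler_expR.
  have : 0 <= (N%:R - 2 * L) * a by apply: mulr_ge0; lra.
  nra.
have e2a : expR (- (2 * a)) = 16^-1.
  by rewrite (_ : - (2 * a) = - a + - a) ?expRD ?ea; lra.
have e14 : expR (- 4^-1) <= 4 / 5 :> R.
  rewrite expRN -[leRHS]invf_div lef_pV2 ?posrE ?expR_gt0 //.
  by have := expR_ge1Dx (4^-1 : R); lra.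
have e18 : 7 / 8 <= expR (- 8^-1) :> R by have := expR_ge1Dx (- 8^-1 : R); lra.
have a8 : - (2 * a) <= - 8^-1 by rewrite -ler_expR e2a; lra.
have := expR_sum_scale_le L (- 4^-1) (- (2 * a)) (- 8^-1) L1 ltac:(lra) a8
  ltac:(lra).
by move: Qpow; rewrite !mulrN; lra.
Qed.

(* With s = sqrt (ln u), i.e. u = e^(s^2), the tail lower bound at t = s/2
   gives Q(s/2)^N <= e^(-N p) with N p = L u p >= L s / 2. *)
Lemma expR_add_normal_abs_cdf_half_sqrt_ln_le (L : R) (N : nat) :
  1 <= L -> 2 * L <= N%:R -> 4 <= Num.sqrt (ln (N%:R / L)) ->
  expR (- (L * (Num.sqrt (ln (N%:R / L)) / 2))) +
    Q (Num.sqrt (ln (N%:R / L)) / 2) ^+ N <=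
  expR (- (L * (Num.sqrt (ln (N%:R / L)) / 4))).
Proof.
move=> L1 LN; set u := N%:R / L; set s := Num.sqrt (ln u) => s4.
have u2 : 2 <= u by rewrite ler_pdivlMr //; lra.
have Nu : N%:R = L * u by rewrite /u mulrCA divff ?mulr1 //; lra.
have us : u = expR (s ^+ 2).
  by rewrite sqr_sqrtr ?lnK ?posrE //; [lra | have := four_ninths_le_ln _ u2; lra].
have s0 : 0 <= s / 2 by lra.
set p := 3^-1 * expR (- (s / 2 + 1) ^+ 2 / 2).
have Qp : Q (s / 2) <= expR (- p).
  apply: le_trans (normal_abs_cdf_le_tail _ s0) _; rewrite -/p.
  by have := expR_ge1Dx (- p); lra.
have up : s / 2 <= u * p.
  rewrite us /p mulrCA -expRD.
  by have := expR_ge1Dx (s ^+ 2 + - (s / 2 + 1) ^+ 2 / 2); nra.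
have Qpow : Q (s / 2) ^+ N <= expR (L * - (u * p)).
  apply: (@le_trans _ _ (expR (- p) ^+ N)).
    by rewrite lerXn2r ?nnegrE ?normal_abs_cdf_ge0 ?expR_ge0.
  by rewrite -expRM_natl Nu ler_expR; nra.
have sum : expR (- (s / 2)) + expR (- (u * p)) <= expR (- (s / 4)).
  have e1 : expR (- (u * p)) <= expR (- (s / 2)) by rewrite ler_expR; lra.
  rewrite (_ : - (s / 4) = - (s / 2) + s / 4) ?expRD; last lra.
  by have := expR_ge1Dx (s / 4); have := expR_gt0 (- (s / 2)); nra.
have := expR_sum_scale_le L (- (s / 2)) (- (u * p)) (- (s / 4)) L1 ltac:(lra)
  ltac:(lra) sum.
by move: Qpow; rewrite !mulrN; lra.
Qed.

End real_estimates.

Section neg_ln_laplace_max_abs.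
Context {d} {T : measurableType d} {R : realType} (P : probability T R).
Variable xi : nat -> {RV P >-> R}.
Hypothesis iid : iid_std_gaussian xi.
Local Notation laplace N L :=
  (fine 'E_P[fun w => expR (- (L * max_abs xi N w))]%E).

Lemma laplace_max_abs_ge (N : nat) (L : R) : 0 < L -> 2 * L <= N%:R ->
  expR (- (L * (3 * Num.sqrt (ln (N%:R / L))) + 2 * L)) <= laplace N L.
Proof.
move=> L0 LN; have s0 := sqrtr_ge0 (ln (N%:R / L)).
have /andP[lo _] :=
  laplace_max_abs_bounds N L _ iid (ltW L0) (mulr_ge0 (ler0n _ 3) s0).
apply: le_trans lo; rewrite opprD expRD ler_pM2l ?expR_gt0 //.
exact: normal_abs_cdf_pow_ge.
Qed.

Lemma neg_ln_laplace_max_abs_le (N : nat) (L : R) : 0 < L -> 2 * L <= N%:R ->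
  - ln (laplace N L) <= 6 * L * Num.sqrt (ln (N%:R / L)).
Proof.
move=> L0 LN; have s23 : 2 / 3 <= Num.sqrt (ln (N%:R / L)).
  by apply: two_thirds_le_sqrt_ln; rewrite ler_pdivlMr.
apply: le_trans (oppr_ln_le _ _ (laplace_max_abs_ge N L L0 LN)) _; nra.
Qed.

Lemma neg_ln_laplace_max_abs_ge (N : nat) (L : R) : 1 <= L -> 2 * L <= N%:R ->
  1 / 32 * L * Num.sqrt (ln (N%:R / L)) <= - ln (laplace N L).
Proof.
move=> L1 LN; have L0 : 0 < L by lra.
have pos := lt_le_trans (expR_gt0 _) (laplace_max_abs_ge N L L0 LN).
set s := Num.sqrt (ln (N%:R / L)); have s0 : 0 <= s by exact: sqrtr_ge0.
have [s4|s4] := leP s 4.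
  have /andP[_ hi] := laplace_max_abs_bounds N L 4^-1 iid (ltW L0) ltac:(lra).
  have := oppr_ln_ge _ _ pos
    (le_trans hi (expR_add_normal_abs_cdf_quarter_le L N L1 LN)).
  by nra.
have /andP[_ hi] := laplace_max_abs_bounds N L (s / 2) iid (ltW L0) ltac:(lra).
have := oppr_ln_ge _ _ pos
  (le_trans hi (expR_add_normal_abs_cdf_half_sqrt_ln_le L N L1 LN (ltW s4))).
by rewrite -/s; have := mulr_ge0 (ltW L0) s0; nra.
Qed.

End neg_ln_laplace_max_abs.

Theorem lemma6 (d : measure_display) (T : measurableType d) (R : realType)
    (P : probability T R) (xi : nat -> {RV P >-> R}) :
  iid_std_gaussian xi ->
  (exists c1 : R, 0 < c1 /\
    forall (L : R) (N : nat), 0 < L -> (1 <= N)%N -> 2 * L <= N%:R ->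
      - ln (fine 'E_P[fun w => expR (- (L * max_abs xi N w))])
        <= c1 * L * Num.sqrt (ln (N%:R / L))) /\
  (exists c2 : R, 0 < c2 /\
    forall (L : R) (N : nat), 1 <= L -> (1 <= N)%N -> 2 * L <= N%:R ->
      - ln (fine 'E_P[fun w => expR (- (L * max_abs xi N w))])
        >= c2 * L * Num.sqrt (ln (N%:R / L))).
Proof.
move=> iid; split.
  exists 6; split=> [|L N L0 _]; first lra.
  exact: neg_ln_laplace_max_abs_le.
exists (1 / 32); split=> [|L N L1 _]; first lra.
exact: neg_ln_laplace_max_abs_ge.
Qed.
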